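(* Let $0<\varepsilon<\frac12$, let $n\ge C\varepsilon^{-2.01}$ for a sufficiently large constant $C$, let $c>0$ be a sufficiently small constant, set $r=s=c\log(n)/\sqrt{\varepsilon}$ and $k=(n-1)/(r+1)$ (an integer), with $k\ge 100s$, and let $A=UDU^\top$, $g_1,\dots,g_s$, $u_1$, $a_{j,t}$, $v_{j,t}$, $V^{(t)}$ be as described in the context. Suppose that the following three events hold: (1) $a_{j,1}\le 5\sqrt{\log n}$ for all $j\in[s]$; (2) $0.5\sqrt{k}\le a_{j,t}\le 2\sqrt{k}$ for all $j\in[s]$ and $2\le t\le r+2$; (3) for every $2\le t\le r+2$, all singular values of $V^{(t)}$ lie in $[\frac14,4]$. Then every unit vector $v\in\mathrm{Span}\{A^{\ell}g_j:0\le\ell\le r,\ 1\le j\le s\}$ satisfies $|\langle v,u_1\rangle|<\sqrt{\varepsilon/10}$.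
   Context: $\lambda_1=1+2\varepsilon$ and $\lambda_t=\cos\left(\frac{t-2}{r}\pi\right)$ for $2\le t\le r+2$. $D$ is the $n\times n$ diagonal matrix with $D_{1,1}=\lambda_1$ and $D_{i,i}=\lambda_{1+\lceil (i-1)/k\rceil}$ for $2\le i\le n$. $U$ is an $n\times n$ orthogonal matrix and $A=UDU^\top$; $u_1$ is the unit eigenvector of eigenvalue $\lambda_1$. $g_1,\dots,g_s\in\mathbb{R}^n$ are vectors. $a_{j,1}=|\langle g_j,u_1\rangle|$; for $2\le t\le r+2$, with $P_t$ the orthogonal projection onto the $\lambda_t$-eigenspace of $A$, $a_{j,t}=\|P_tg_j\|_2$, $v_{j,t}=P_tg_j/a_{j,t}$, and $V^{(t)}\in\mathbb{R}^{n\times s}$ has $j$-th column $v_{j,t}$. *)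

From HB Require Import structures.
From mathcomp Require Import all_boot all_order all_algebra.
From mathcomp Require Import reals exp trigo.
Set Implicit Arguments.
Unset Strict Implicit.
Unset Printing Implicit Defensive.
Import Order.TTheory GRing.Theory Num.Theory.
Local Open Scope ring_scope.

Definition dotv (R : realType) n (x y : 'cV[R]_n) : R := (x^T *m y) 0 0.
Definition normv (R : realType) n (x : 'cV[R]_n) : R := Num.sqrt (dotv x x).

Definition lam1 (R : realType) (eps : R) : R := 1 + 2 * eps.
Definition lamt (R : realType) (r t : nat) : R := cos ((t - 2)%:R / r%:R * pi).

(* D: with 0-based index i (= paper's i-1), D_{0,0} = lambda_1 and
   D_{i,i} = lambda_{1 + ceil(i/k)} for 1 <= i <= n-1;
   ceil(i/k) = (i + k - 1) %/ k for k > 0. *)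
Definition Dmat (R : realType) (n k r : nat) (eps : R) : 'M[R]_n :=
  diag_mx (\row_(i < n) if (i : nat) == 0%N then lam1 eps
                        else lamt R r (1 + (i + k - 1) %/ k)).

Definition orthogonal_mx (R : realType) n (U : 'M[R]_n) : Prop :=
  U^T *m U = 1%:M /\ U *m U^T = 1%:M.

Definition eigvec_set (R : realType) n (A : 'M[R]_n) (l : R) (x : 'cV[R]_n) : Prop :=
  A *m x = l *: x.

Definition is_orth_proj_onto (R : realType) n (P : 'M[R]_n) (S : 'cV[R]_n -> Prop) : Prop :=
  P^T = P /\ P *m P = P /\ (forall x, S x <-> P *m x = x).

(* sigma is a singular value of M : 'M_(m,p) (used with p <= m):
   sigma >= 0 and sigma^2 is an eigenvalue of M^T M. *)
Definition singular_value (R : realType) m p (M : 'M[R]_(m, p)) (sigma : R) : Prop :=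
  0 <= sigma /\ eigenvalue (M^T *m M) (sigma ^+ 2).

Definition in_krylov (R : realType) n r s (A : 'M[R]_n) (g : 'I_s -> 'cV[R]_n)
  (v : 'cV[R]_n) : Prop :=
  exists beta : 'I_r.+1 -> 'I_s -> R,
    v = \sum_(l < r.+1) \sum_(j < s) beta l j *: (A ^+ l *m g j).

Definition acoef (R : realType) n s (u1 : 'cV[R]_n) (P : nat -> 'M[R]_n)
  (g : 'I_s -> 'cV[R]_n) (j : 'I_s) (t : nat) : R :=
  if t == 1%N then `|dotv (g j) u1| else normv (P t *m g j).

Definition Vmat (R : realType) n s (u1 : 'cV[R]_n) (P : nat -> 'M[R]_n)
  (g : 'I_s -> 'cV[R]_n) (t : nat) : 'M[R]_(n, s) :=
  \matrix_(i < n, j < s) ((P t *m g j) i 0 / acoef u1 P g j t).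

(* Write v = sum_j p_j(A) g_j with deg p_j <= r.  Then
   <v, u1> = sum_j p_j(lambda_1) <g_j, u1>, so event (1) and Cauchy-Schwarz give
   <v, u1>^2 <= 25 log n * s * sum_j p_j(lambda_1)^2.  On the eigenspace of
   lambda_t we have P_t v = V^(t) (p_j(lambda_t) a_{j,t})_j, so events (2) and (3)
   give |P_t v|^2 >= k/64 * sum_j p_j(lambda_t)^2, and Bessel's inequality over
   the r + 1 eigenspaces yields sum_t sum_j p_j(lambda_t)^2 <= 64/k.
   The lambda_t = cos((t-2) pi / r) are the extremal points of the Chebyshev
   polynomial T_r, and Lagrange interpolation at them shows
   p(y)^2 <= T_r(y)^2 * sum_t p(lambda_t)^2 whenever deg p <= r and y >= 1.
   Finally T_r(1 + 2 eps) <= (1 + 4 sqrt eps)^r <= n^(4c); with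
   r ~ c log n / sqrt eps and n >= eps^(-2.01) this makes
   <v, u1>^2 <= 1600 log n * r * T_r(lambda_1)^2 / k < eps / 10. *)

From HB Require Import structures.
From mathcomp Require Import all_boot all_order all_algebra.
From mathcomp Require Import reals sequences exp trigo complex.
From mathcomp Require Import zify ring lra.
Import Order.TTheory GRing.Theory Num.Theory.
Local Open Scope ring_scope.

Set Implicit Arguments.
Unset Strict Implicit.
Unset Printing Implicit Defensive.

(** * Rayleigh quotients of real symmetric matrices *)

Section Rayleigh.
Local Open Scope sesquilinear_scope.

Lemma unitary_quadform_ge (C : numClosedFieldType) s (P : 'M[C]_s) (d : 'rV_s) m
    (y : 'rV_s) : P \is unitarymx -> (forall j, m <= d 0 j) ->
  m * (y *m y^t*) 0 0 <= (y *m (P^t* *m diag_mx d *m P) *m y^t*) 0 0.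
Proof.
move=> Punitary dge; pose w := y *m P^t*.
have wt : w^t* = P *m y^t* by rewrite /w trmx_mul map_mxM trmxCK.
have -> : y *m y^t* = w *m w^t* by rewrite wt mulmxA mulmxKtV.
have -> : y *m (P^t* *m diag_mx d *m P) *m y^t* = w *m diag_mx d *m w^t*.
  by rewrite wt !mulmxA.
rewrite mul_mx_diag !mxE mulr_sumr; apply: ler_sum => j _; rewrite !mxE.
by rewrite mulrAC [X in _ <= X]mulrC ler_wpM2r ?mul_conjC_ge0.
Qed.

Section RealSymmetric.
Variables (R : rcfType) (s : nat) (M : 'M[R]_s).
Hypothesis Msym : M^T = M.

Local Notation toC := (real_complex R).
Local Notation Mc := (map_mx toC M).

Lemma realsym_map_complex : Mc \is hermsymmx.
Proof.
apply: realsym_hermsym.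
  by apply/is_hermitianmxP; rewrite expr0 scale1r map_mx_id // map_trmx Msym.
by apply/mxOverP => i j; rewrite mxE; apply/complex_realP; exists (M i j).
Qed.

Local Notation S := (spectralmx Mc).
Local Notation d := (spectral_diag Mc).

Lemma spectralmx_map_complexE : Mc = S^t* *m diag_mx d *m S.
Proof.
have /hermitian_normalmx/orthomx_spectralP {1}-> := realsym_map_complex.
by rewrite invmx_unitary // spectral_unitarymx.
Qed.

Lemma spectral_diag_map_complex i : exists2 a, eigenvalue M a & d 0 i = toC a.
Proof.
have /mxOverP/(_ 0 i)/complex_realP[a da] :=
  hermitian_spectral_diag_real realsym_map_complex.
exists a => //; rewrite -(eigenvalue_map toC).
suff : eigenvalue Mc (d 0 i) by rewrite da.
apply/eigenvalueP; exists (row i S).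
  have SMc : S *m Mc = diag_mx d *m S.
    have /unitarymxP SS := spectral_unitarymx Mc.
    by rewrite {2}spectralmx_map_complexE !mulmxA SS mul1mx.
  move: SMc => /(congr1 (row i)); rewrite -!row_mul => ->.
  by rewrite mul_diag_mx; apply/rowP => j; rewrite !mxE.
apply/eqP => Si0; have /unitarymxP/(congr1 (row i)) := spectral_unitarymx Mc.
rewrite row_mul Si0 mul0mx => /rowP/(_ i); rewrite !mxE eqxx => /eqP.
by rewrite eq_sym oner_eq0.
Qed.

Lemma realsym_quadform_ge m : (forall a, eigenvalue M a -> m <= a) ->
  forall x : 'rV[R]_s, m * (x *m x^T) 0 0 <= (x *m M *m x^T) 0 0.
Proof.
move=> Mge x; have conjR (a : R) : (toC a)^* = toC a.
  by apply: conj_Creal; apply/complex_realP; exists a.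
have xct : (map_mx toC x)^t* = map_mx toC x^T.
  by apply/matrixP => i j; rewrite !mxE conjR.
have dge j : toC m <= d 0 j.
  by have [a /Mge ma ->] := spectral_diag_map_complex j; rewrite lecR.
have := unitary_quadform_ge (map_mx toC x) (spectral_unitarymx Mc) dge.
by rewrite -spectralmx_map_complexE xct -!map_mxM !mxE -rmorphM lecR.
Qed.

End RealSymmetric.

End Rayleigh.

(** * Inner products, orthogonal projections and eigenspaces *)

Section Euclidean.
Variables (R : realType) (n : nat).
Implicit Types (x y : 'cV[R]_n) (A P : 'M[R]_n).

Lemma dotvE x y : dotv x y = \sum_i x i 0 * y i 0.
Proof. by rewrite /dotv mxE; apply: eq_bigr => i _; rewrite mxE. Qed.

Lemma dotvC x y : dotv x y = dotv y x.
Proof. by rewrite !dotvE; apply: eq_bigr => i _; rewrite mulrC. Qed.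

Lemma dotvZl a x y : dotv (a *: x) y = a * dotv x y.
Proof. by rewrite /dotv linearZ -scalemxAl mxE. Qed.

Lemma dotvBr x y z : dotv x (y - z) = dotv x y - dotv x z.
Proof. by rewrite !dotvE -sumrB; apply: eq_bigr => i _; rewrite !mxE mulrBr. Qed.

Lemma dotv_suml (I : Type) (s : seq I) (F : I -> 'cV[R]_n) y :
  dotv (\sum_(i <- s) F i) y = \sum_(i <- s) dotv (F i) y.
Proof. by rewrite /dotv raddf_sum mulmx_suml summxE. Qed.

Lemma dotv_sumr (I : Type) (s : seq I) (F : I -> 'cV[R]_n) y :
  dotv y (\sum_(i <- s) F i) = \sum_(i <- s) dotv y (F i).
Proof. by rewrite /dotv mulmx_sumr summxE. Qed.

Lemma dotv_mull A x y : dotv (A *m x) y = dotv x (A^T *m y).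
Proof. by rewrite /dotv trmx_mul mulmxA. Qed.

Lemma dotv0l y : dotv 0 y = 0.
Proof. by rewrite /dotv trmx0 mul0mx mxE. Qed.

Lemma dotvv_ge0 x : 0 <= dotv x x.
Proof. by rewrite dotvE sumr_ge0 // => i _; rewrite -expr2 sqr_ge0. Qed.

Lemma normv1_dotvv x : normv x = 1 -> dotv x x = 1.
Proof. by move=> x1; rewrite -[LHS]sqr_sqrtr ?dotvv_ge0 // -/(normv x) x1 expr1n. Qed.

Lemma orth_proj_dotvE P x : P^T = P -> P *m P = P ->
  dotv x (P *m x) = dotv (P *m x) (P *m x).
Proof. by move=> Psym Pidem; rewrite dotv_mull Psym mulmxA Pidem. Qed.

Lemma orth_proj_dotv_le P x : P^T = P -> P *m P = P -> dotv x (P *m x) <= dotv x x.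
Proof.
move=> Psym Pidem; set Q := 1%:M - P.
have QT : Q^T = Q by rewrite /Q linearB /= trmx1 Psym.
have QQ : Q *m Q = Q.
  by rewrite /Q mulmxBl !mulmxBr !mul1mx mulmx1 Pidem subrr subr0.
rewrite -subr_ge0 -dotvBr (_ : x - P *m x = Q *m x); last by rewrite mulmxBl mul1mx.
by rewrite orth_proj_dotvE ?dotvv_ge0.
Qed.

Lemma bessel_orth_proj (I : finType) (P : I -> 'M[R]_n) x :
  (forall i, (P i)^T = P i) -> (forall i, P i *m P i = P i) ->
  (forall i j, i != j -> P i *m P j = 0) ->
  \sum_i dotv (P i *m x) (P i *m x) <= dotv x x.
Proof.
move=> Psym Pidem Porth; pose Q := \sum_i P i.
have QT : Q^T = Q by rewrite /Q raddf_sum; apply: eq_bigr => i _; exact: Psym.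
have QQ : Q *m Q = Q.
  rewrite /Q mulmx_suml; apply: eq_bigr => i _.
  by rewrite mulmx_sumr (bigD1 i) //= big1 ?addr0 // => j ji; rewrite Porth // eq_sym.
have -> : \sum_i dotv (P i *m x) (P i *m x) = dotv x (Q *m x).
  by rewrite /Q mulmx_suml dotv_sumr; apply: eq_bigr => i _; rewrite orth_proj_dotvE.
exact: orth_proj_dotv_le.
Qed.

Lemma sym_eigvec_dotv_powmx A (u g : 'cV[R]_n) lam l : A^T = A -> A *m u = lam *: u ->
  dotv (A ^+ l *m g) u = lam ^+ l * dotv g u.
Proof.
move=> Asym Au; elim: l => [|l IH]; first by rewrite expr0 mul1mx mul1r.
rewrite exprS -mulmxE -mulmxA dotv_mull Asym Au dotvC dotvZl dotvC IH.
by rewrite exprS mulrA.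
Qed.

Lemma eigenproj_powmx A P (g : 'cV[R]_n) mu l : P *m A = mu *: P ->
  P *m (A ^+ l *m g) = mu ^+ l *: (P *m g).
Proof.
move=> PA; elim: l => [|l IH]; first by rewrite expr0 mul1mx scale1r.
by rewrite exprS -mulmxE -mulmxA mulmxA PA -scalemxAl IH scalerA -exprS.
Qed.

Lemma orth_proj_eigvec_commute A P mu : A^T = A ->
  is_orth_proj_onto P (eigvec_set A mu) -> A *m P = mu *: P /\ P *m A = mu *: P.
Proof.
move=> Asym [Psym [Pidem PS]].
have AP : A *m P = mu *: P.
  apply/matrixP => i j; have := (PS (P *m delta_mx j 0)).2.
  rewrite mulmxA Pidem => /(_ erefl) /(congr1 (fun y : 'cV_n => y i 0)).
  by rewrite mulmxA -!colE !mxE.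
by split=> //; rewrite -[P]Psym -[A]Asym -trmx_mul AP linearZ.
Qed.

Lemma eigenproj_orthogonal A P1 P2 (l1 l2 : R) :
  P1 *m A = l1 *: P1 -> A *m P2 = l2 *: P2 -> l1 != l2 -> P1 *m P2 = 0.
Proof.
move=> P1A AP2 l12; have : (l1 - l2) *: (P1 *m P2) = 0.
  by rewrite scalerBl scalemxAl -P1A scalemxAr -AP2 mulmxA subrr.
by move/eqP; rewrite scaler_eq0 subr_eq0 (negbTE l12) => /eqP.
Qed.

End Euclidean.

Lemma eigenvalue_gram_ge0 (R : realFieldType) m s (V : 'M[R]_(m, s)) a :
  eigenvalue (V^T *m V) a -> 0 <= a.
Proof.
case/eigenvalueP => w wVV w_neq0.
have sqE p (y : 'rV[R]_p) : (y *m y^T) 0 0 = \sum_j y 0 j ^+ 2.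
  by rewrite mxE; apply: eq_bigr => j _; rewrite mxE expr2.
have sq_ge0 p (y : 'rV[R]_p) : 0 <= (y *m y^T) 0 0.
  by rewrite sqE sumr_ge0 // => j _; exact: sqr_ge0.
have ww_gt0 : 0 < (w *m w^T) 0 0.
  rewrite lt0r sq_ge0 andbT; apply: contra w_neq0.
  rewrite sqE psumr_eq0 => [/allP w0|j _]; last exact: sqr_ge0.
  apply/eqP/rowP => j; rewrite mxE; apply/eqP.
  by rewrite -sqrf_eq0 (implyP (w0 j (mem_index_enum j))).
rewrite -(pmulr_lge0 _ ww_gt0).
rewrite (_ : _ * _ = ((w *m V^T) *m (w *m V^T)^T) 0 0) ?sq_ge0 //.
by rewrite trmx_mul trmxK !mulmxA -[w *m _ *m V]mulmxA wVV -scalemxAl [RHS]mxE.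
Qed.

Lemma singular_value_lb (R : realType) m s (V : 'M[R]_(m, s)) sigma0 (c : 'cV_s) :
  0 <= sigma0 -> (forall sigma, singular_value V sigma -> sigma0 <= sigma) ->
  sigma0 ^+ 2 * dotv c c <= dotv (V *m c) (V *m c).
Proof.
move=> s0 Vge; have VVsym : (V^T *m V)^T = V^T *m V by rewrite trmx_mul trmxK.
have VVge a : eigenvalue (V^T *m V) a -> sigma0 ^+ 2 <= a.
  move=> Va; have a0 := eigenvalue_gram_ge0 Va.
  rewrite -(sqr_sqrtr a0) lerXn2r ?nnegrE ?sqrtr_ge0 // Vge //.
  by split; rewrite ?sqrtr_ge0 ?sqr_sqrtr.
have := realsym_quadform_ge VVsym VVge c^T.
by rewrite /dotv trmxK trmx_mul !mulmxA.
Qed.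

Lemma sqr_sum_le (R : realFieldType) s (a : 'I_s -> R) :
  (\sum_i a i) ^+ 2 <= s%:R * \sum_i a i ^+ 2.
Proof.
have rowE i : \sum_j (a i - a j) ^+ 2 =
    s%:R * a i ^+ 2 - (a i * \sum_j a j) *+ 2 + \sum_j a j ^+ 2.
  rewrite mulr_sumr -sumrMnl mulr_natl -[s in _ *+ s]card_ord -sumr_const.
  by rewrite -sumrB -big_split /=; apply: eq_bigr => j _; ring.
have : 0 <= \sum_i \sum_j (a i - a j) ^+ 2.
  by apply: sumr_ge0 => i _; apply: sumr_ge0 => j _; exact: sqr_ge0.
rewrite (eq_bigr _ (fun i _ => rowE i)) big_split sumrB /= sumr_const card_ord.
rewrite -mulr_sumr sumrMnl -mulr_suml.
rewrite (_ : _ + _ = (s%:R * \sum_i a i ^+ 2 - (\sum_i a i) ^+ 2) *+ 2).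
  by rewrite pmulrn_lge0 // subr_ge0.
by rewrite -mulr_natl; ring.
Qed.

(** * Lagrange interpolation at decreasing nodes *)

Section LagrangeInterpolation.
Variables (R : rcfType) (r : nat) (x : 'I_r.+1 -> R).
Hypothesis x_decr : forall i j : 'I_r.+1, (i < j)%N -> x j < x i.

Lemma nodes_inj : injective x.
Proof.
move=> i j xij; case: (ltngtP i j) => [ij|ji|/val_inj //].
  by have := x_decr ij; rewrite xij ltxx.
by have := x_decr ji; rewrite xij ltxx.
Qed.

Definition lagrange_basis (m : 'I_r.+1) : {poly R} :=
  (\prod_(i | i != m) (x m - x i))^-1 *: \prod_(i | i != m) ('X - (x i)%:P).

Lemma horner_lagrange_basis m y :
  (lagrange_basis m).[y] =
    (\prod_(i | i != m) (x m - x i))^-1 * \prod_(i | i != m) (y - x i).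
Proof.
by rewrite hornerZ horner_prod; congr (_ * _); apply: eq_bigr => i _; rewrite hornerXsubC.
Qed.

Lemma lagrange_basis_node m j : (lagrange_basis m).[x j] = (j == m)%:R.
Proof.
rewrite horner_lagrange_basis; have [->|jm] := eqVneq j m.
  rewrite mulVf // prodf_seq_neq0; apply/allP => i _; apply/implyP => im.
  by rewrite subr_eq0 (inj_eq nodes_inj) eq_sym.
by rewrite [X in _ * X](bigD1 j) //= subrr mul0r mulr0.
Qed.

Lemma size_lagrange_basis m : (size (lagrange_basis m) <= r.+1)%N.
Proof.
apply: leq_trans (size_scale_leq _ _) _.
rewrite size_prod; last by move=> i _; rewrite polyXsubC_eq0.
under eq_bigr do rewrite size_XsubC.
by rewrite sum_nat_const cardC1 card_ord /=; lia.
Qed.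

Lemma poly_nodes_eq0 (p : {poly R}) :
  (size p <= r.+1)%N -> (forall i, p.[x i] = 0) -> p = 0.
Proof.
move=> sp p0; apply/eqP; apply: contraT => /max_poly_roots.
have roots : all (root p) [seq x i | i <- enum 'I_r.+1].
  by apply/allP => _ /mapP [i _ ->]; apply/rootP.
move=> /(_ _ roots); rewrite (map_inj_uniq nodes_inj) enum_uniq.
by rewrite size_map size_enum_ord ltnNge sp => /(_ isT).
Qed.

Lemma lagrange_interpolation (p : {poly R}) : (size p <= r.+1)%N ->
  p = \sum_m p.[x m] *: lagrange_basis m.
Proof.
move=> sp; apply/eqP; rewrite -subr_eq0; apply/eqP/poly_nodes_eq0 => [|i].
  rewrite (leq_trans (size_add _ _)) // geq_max sp size_polyN.
  rewrite (leq_trans (size_sum _ _ _)) //; apply/bigmax_leqP => m _.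
  exact: leq_trans (size_scale_leq _ _) (size_lagrange_basis m).
rewrite hornerD hornerN horner_sum (bigD1 i) //= big1 => [|m mi].
  by rewrite hornerZ lagrange_basis_node eqxx mulr1 addr0 subrr.
by rewrite hornerZ lagrange_basis_node eq_sym (negbTE mi) mulr0.
Qed.

Lemma lagrange_basis_sign (m : 'I_r.+1) y : x ord0 <= y ->
  0 <= (-1) ^+ m * (lagrange_basis m).[y].
Proof.
move=> x0y; pose sg (i : 'I_r.+1) : R := if (i < m)%N then -1 else 1.
have sgm : \prod_(i | i != m) sg i = (-1) ^+ m.
  have -> : \prod_(i | i != m) sg i = \prod_i sg i.
    by rewrite [RHS](bigD1 m) //= /sg ltnn mul1r.
  rewrite /sg -big_mkcond /= -(big_ord_widen r.+1 (fun=> -1 : R) (ltnW (ltn_ord m))).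
  by rewrite prodr_const card_ord.
rewrite horner_lagrange_basis -sgm -prodfV mulrA -!big_split /=.
apply: prodr_ge0 => i im; apply: mulr_ge0.
  rewrite /sg; case: ltnP => [im'|mi].
    by rewrite mulN1r oppr_ge0 invr_le0 subr_le0 ltW // x_decr.
  by rewrite mul1r invr_ge0 subr_ge0 ltW // x_decr // ltn_neqAle eq_sym im.
rewrite subr_ge0 (le_trans _ x0y) //.
have [i0|ipos] := posnP i; last exact/ltW/(x_decr (i := ord0)).
by rewrite (_ : i = ord0) //; apply: val_inj.
Qed.

Lemma alternating_interp_sqr_le (q p : {poly R}) y :
  (size q <= r.+1)%N -> (forall m : 'I_r.+1, q.[x m] = (-1) ^+ m) ->
  (size p <= r.+1)%N -> x ord0 <= y ->
  p.[y] ^+ 2 <= q.[y] ^+ 2 * \sum_m p.[x m] ^+ 2.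
Proof.
move=> sq qx sp x0y; set S := \sum_m _.
have qyE : q.[y] = \sum_m `|(lagrange_basis m).[y]|.
  rewrite {1}(lagrange_interpolation sq) horner_sum; apply: eq_bigr => m _.
  rewrite hornerZ qx -(ger0_norm (lagrange_basis_sign m x0y)) normrM.
  by rewrite normrX normrN1 expr1n mul1r.
have pxm_le m : `|p.[x m]| <= Num.sqrt S.
  rewrite -sqrtr_sqr ler_wsqrtr // /S (bigD1 m) //= lerDl.
  by apply: sumr_ge0 => i _; exact: sqr_ge0.
have py_le : `|p.[y]| <= Num.sqrt S * q.[y].
  rewrite {1}(lagrange_interpolation sp) horner_sum qyE mulr_sumr.
  apply: le_trans (ler_norm_sum _ _ _) _; apply: ler_sum => m _.
  by rewrite hornerZ normrM ler_wpM2r.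
rewrite -real_normK ?num_real // -[S]sqr_sqrtr ?sumr_ge0 // => [|m _]; last first.
  exact: sqr_ge0.
by rewrite -exprMn mulrC lerXn2r ?nnegrE ?(le_trans _ py_le).
Qed.

End LagrangeInterpolation.

(** * Chebyshev polynomials *)

Fixpoint chebyshev_pair (R : nzRingType) n : {poly R} * {poly R} :=
  if n is n'.+1 then
    let: (p, q) := chebyshev_pair R n' in (q, 'X * q *+ 2 - p)
  else (1, 'X).

Definition chebyshev (R : nzRingType) n : {poly R} := (chebyshev_pair R n).1.

Lemma size_chebyshev_pair (R : nzRingType) n :
  (size (chebyshev_pair R n).1 <= n.+1)%N /\ (size (chebyshev_pair R n).2 <= n.+2)%N.
Proof.
elim: n => [|n] /=; first by rewrite size_poly1 size_polyX.
case: chebyshev_pair => p q /= [sp sq]; split => //.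
rewrite (leq_trans (size_add _ _)) // geq_max size_polyN.
rewrite (leq_trans sp (leqW (leqW _))) //.
rewrite mulr2n (leq_trans (size_add _ _)) // geq_max andbb.
by rewrite (leq_trans (size_polyMleq _ _)) // size_polyX.
Qed.

Lemma size_chebyshev (R : nzRingType) n : (size (chebyshev R n) <= n.+1)%N.
Proof. exact: (size_chebyshev_pair R n).1. Qed.

Lemma chebyshev_pair_cos (R : realType) n (t : R) :
  (chebyshev_pair R n).1.[cos t] = cos (n%:R * t) /\
  (chebyshev_pair R n).2.[cos t] = cos (n.+1%:R * t).
Proof.
elim: n => [|n] /=; first by rewrite hornerC hornerX mul0r cos0 mul1r.
case: chebyshev_pair => p q /= [pt qt]; split => //.
rewrite hornerD hornerN hornerMn hornerM hornerX pt qt.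
have -> : n.+2%:R * t = n.+1%:R * t + t by rewrite -addn1 natrD mulrDl mul1r.
have -> : n%:R * t = n.+1%:R * t - t by rewrite -addn1 natrD mulrDl mul1r addrK.
by rewrite cosB cosD; ring.
Qed.

Lemma chebyshev_pair_growth (R : realFieldType) (y B : R) n :
  1 <= y -> y <= B -> B * (y *+ 2 - B) <= 1 ->
  let: (p, q) := chebyshev_pair R n in
  [/\ 0 <= p.[y], p.[y] <= q.[y], q.[y] <= B * p.[y] & p.[y] <= B ^+ n].
Proof.
move=> y1 yB By; elim: n => [|n] /=.
  by rewrite hornerC hornerX expr0 mulr1; split; lra.
case: chebyshev_pair => p q /= [p0 pq qB pB].
rewrite hornerD hornerN hornerMn hornerM hornerX mulr2n exprS.
set a := p.[y] in p0 pq qB pB *; set b := q.[y] in pq qB *.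
have b0 : 0 <= b by lra.
have ybb : b <= y * b by rewrite ler_peMl.
split; [lra | lra | | by apply: le_trans qB _; apply: ler_wpM2l => //; lra].
have [yyB|yyB] := lerP (y + y - B) 0.
  have : (y + y - B) * b <= 0 by apply: mulr_le0_ge0.
  lra.
have : (y + y - B) * b <= (y + y - B) * (B * a) by apply: ler_wpM2l; lra.
have : B * (y + y - B) * a <= a by rewrite ler_piMl // -mulr2n.
lra.
Qed.

Lemma chebyshev_le_expn (R : realFieldType) (y B : R) n :
  1 <= y -> y <= B -> B * (y *+ 2 - B) <= 1 ->
  0 <= (chebyshev R n).[y] <= B ^+ n.
Proof.
move=> y1 yB By; have := chebyshev_pair_growth n y1 yB By.
by rewrite /chebyshev; case: chebyshev_pair => p q /= [-> _ _ ->].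
Qed.

Section ChebyshevNodes.
Variables (R : realType) (r : nat).
Hypothesis r_gt0 : (0 < r)%N.

Definition chebyshev_node (m : nat) : R := cos (m%:R / r%:R * pi).

Lemma chebyshev_at_node m : (chebyshev R r).[chebyshev_node m] = (-1) ^+ m.
Proof.
rewrite /chebyshev_node /chebyshev (chebyshev_pair_cos r _).1.
rewrite mulrA mulrCA divff ?pnatr_eq0 -?lt0n // mulr1.
by rewrite -[_ * pi]add0r mulr_natl (alternatingn (@cosDpi R)) cos0 mulr1.
Qed.

Lemma chebyshev_node_decr (i j : 'I_r.+1) :
  (i < j)%N -> chebyshev_node j < chebyshev_node i.
Proof.
have node_in (m : 'I_r.+1) : m%:R / r%:R * pi \in `[0, pi].
  rewrite in_itv /= mulr_ge0 ?divr_ge0 ?pi_ge0 //= ler_piMl ?pi_ge0 //.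
  by rewrite ler_pdivrMr ?ltr0n // mul1r ler_nat -ltnS.
move=> ij; rewrite /chebyshev_node ltr_cos ?node_in //.
by rewrite ltr_pM2r ?pi_gt0 // ltr_pM2r ?invr_gt0 ?ltr0n // ltr_nat.
Qed.

End ChebyshevNodes.

Lemma chebyshev_lam1_le (R : realType) (eps : R) r : 0 < eps < 2^-1 ->
  0 <= (chebyshev R r).[lam1 eps] <= expR (4 * Num.sqrt eps * r%:R).
Proof.
case/andP => eps0 eps_lt; set q := Num.sqrt eps.
have q0 : 0 <= q by rewrite sqrtr_ge0.
have qq : q ^+ 2 = eps by rewrite sqr_sqrtr // ltW.
have q34 : q <= 3 / 4 by move: eps_lt; rewrite -qq; nra.
have /andP[-> TB] : 0 <= (chebyshev R r).[lam1 eps] <= (1 + 4 * q) ^+ r.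
  apply: chebyshev_le_expn; rewrite /lam1 -qq; [lra | nra |].
  suff : 0 <= 4 * (q ^+ 2 * (3 - 4 * q)) by rewrite mulr2n; lra.
  by rewrite expr2 !mulr_ge0 //; lra.
rewrite (le_trans TB) // [in expR _]mulrC expRM_natl.
by apply: lerXn2r; rewrite ?nnegrE ?expR_ge0 ?expR_ge1Dx //; lra.
Qed.

(** * Vectors of the block Krylov subspace *)

Section KrylovSubspace.
Variables (R : realType) (n r s : nat) (A : 'M[R]_n) (g : 'I_s -> 'cV[R]_n).
Variable beta : 'I_r.+1 -> 'I_s -> R.

Definition krylov_poly (j : 'I_s) : {poly R} := \poly_(l < r.+1) beta (inord l) j.

Local Notation v := (\sum_(l < r.+1) \sum_(j < s) beta l j *: (A ^+ l *m g j)).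

Lemma horner_krylov_poly j y : (krylov_poly j).[y] = \sum_(l < r.+1) beta l j * y ^+ l.
Proof. by rewrite horner_poly; apply: eq_bigr => l _; rewrite inord_val. Qed.

Lemma dotv_krylov_eigvec u lam : A^T = A -> A *m u = lam *: u ->
  dotv v u = \sum_j (krylov_poly j).[lam] * dotv (g j) u.
Proof.
move=> Asym Au; rewrite dotv_suml; under eq_bigr do rewrite dotv_suml.
rewrite exchange_big /=; apply: eq_bigr => j _; rewrite horner_krylov_poly mulr_suml.
by apply: eq_bigr => l _; rewrite dotvZl (sym_eigvec_dotv_powmx _ _ Asym Au) mulrA.
Qed.

Lemma eigenproj_krylov (P : 'M[R]_n) mu : P *m A = mu *: P ->
  P *m v = \sum_j (krylov_poly j).[mu] *: (P *m g j).
Proof.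
move=> PA; rewrite mulmx_sumr; under eq_bigr do rewrite mulmx_sumr.
rewrite exchange_big /=; apply: eq_bigr => j _; rewrite horner_krylov_poly scaler_suml.
by apply: eq_bigr => l _; rewrite -scalemxAr (eigenproj_powmx _ _ PA) scalerA.
Qed.

Lemma eigenproj_krylov_ge (u1 : 'cV[R]_n) (P : nat -> 'M[R]_n) t mu k :
  (0 < k)%N -> P t *m A = mu *: P t ->
  (forall j, 2^-1 * Num.sqrt k%:R <= acoef u1 P g j t) ->
  (forall sigma, singular_value (Vmat u1 P g t) sigma -> 4^-1 <= sigma) ->
  k%:R / 64 * \sum_j (krylov_poly j).[mu] ^+ 2 <= dotv (P t *m v) (P t *m v).
Proof.
move=> k0 PA a_ge V_ge; pose a j := acoef u1 P g j t.
have a_gt0 j : 0 < a j.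
  by apply: lt_le_trans (a_ge j); rewrite mulr_gt0 ?invr_gt0 ?sqrtr_gt0 ?ltr0n.
have a_sqr j : k%:R / 4 <= a j ^+ 2.
  have -> : k%:R / 4 = (2^-1 * Num.sqrt k%:R) ^+ 2 :> R.
    by rewrite exprMn sqr_sqrtr ?ler0n //; field.
  apply: lerXn2r; rewrite ?nnegrE ?(ltW (a_gt0 j)) ?a_ge //.
  by rewrite mulr_ge0 ?invr_ge0 ?sqrtr_ge0.
pose c : 'cV[R]_s := \col_j ((krylov_poly j).[mu] * a j).
have PvE : P t *m v = Vmat u1 P g t *m c.
  apply/matrixP => i z; rewrite (ord1 z) (eigenproj_krylov PA) summxE !mxE.
  apply: eq_bigr => j _; rewrite !mxE -[acoef _ _ _ _ _]/(a j).
  by field; rewrite gt_eqF.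
have quarter_ge0 : 0 <= 4^-1 :> R by rewrite invr_ge0.
rewrite PvE; apply: le_trans (singular_value_lb c quarter_ge0 V_ge).
rewrite dotvE mulr_sumr mulr_sumr ler_sum // => j _; rewrite !mxE.
have := a_sqr j; have := sqr_ge0 (krylov_poly j).[mu]; rewrite !expr2; nra.
Qed.

Lemma dotv_krylov_sqr_le u lam b : A^T = A -> A *m u = lam *: u ->
  (forall j, `|dotv (g j) u| <= b) ->
  dotv v u ^+ 2 <= b ^+ 2 * (s%:R * \sum_j (krylov_poly j).[lam] ^+ 2).
Proof.
move=> Asym Au gu_le; rewrite (dotv_krylov_eigvec Asym Au).
have absD : `|\sum_j (krylov_poly j).[lam] * dotv (g j) u| <=
    b * \sum_j `|(krylov_poly j).[lam]|.
  rewrite mulr_sumr (le_trans (ler_norm_sum _ _ _)) // ler_sum // => j _.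
  by rewrite normrM mulrC ler_wpM2r.
rewrite -real_normK ?num_real //.
apply: le_trans (_ : (b * \sum_j `|(krylov_poly j).[lam]|) ^+ 2 <= _).
  by apply: lerXn2r; rewrite ?nnegrE ?normr_ge0 ?(le_trans _ absD).
rewrite exprMn; apply: ler_wpM2l; first exact: sqr_ge0.
rewrite (le_trans (sqr_sum_le _)) //.
by rewrite (eq_bigr _ (fun j _ => real_normK (num_real (krylov_poly j).[lam]))).
Qed.

Lemma sum_krylov_poly_nodes_le (u1 : 'cV[R]_n) (P : nat -> 'M[R]_n)
    (x : 'I_r.+1 -> R) k :
  A^T = A -> (0 < k)%N -> injective x ->
  (forall m : 'I_r.+1, is_orth_proj_onto (P (m + 2)%N) (eigvec_set A (x m))) ->
  (forall j (m : 'I_r.+1), 2^-1 * Num.sqrt k%:R <= acoef u1 P g j (m + 2)) ->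
  (forall (m : 'I_r.+1) sigma, singular_value (Vmat u1 P g (m + 2)) sigma ->
     4^-1 <= sigma) ->
  k%:R / 64 * \sum_m \sum_j (krylov_poly j).[x m] ^+ 2 <= dotv v v.
Proof.
move=> Asym k0 x_inj Pproj a_ge V_ge.
have PA m := orth_proj_eigvec_commute Asym (Pproj m).
pose Pm (m : 'I_r.+1) := P (m + 2)%N.
rewrite mulr_sumr; apply: le_trans (bessel_orth_proj (P := Pm) v _ _ _).
- apply: ler_sum => m _.
  exact: eigenproj_krylov_ge k0 (PA m).2 (a_ge^~ m) (V_ge m).
- by move=> m; case: (Pproj m).
- by move=> m; case: (Pproj m) => _ [].
- move=> m m' mm'; apply: eigenproj_orthogonal (PA m).2 (PA m').1 _.
  by rewrite (inj_eq x_inj).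
Qed.

Lemma sum_krylov_poly_sqr_le (x : 'I_r.+1 -> R) (q : {poly R}) y :
  (forall i j : 'I_r.+1, (i < j)%N -> x j < x i) ->
  (size q <= r.+1)%N -> (forall m : 'I_r.+1, q.[x m] = (-1) ^+ m) -> x ord0 <= y ->
  \sum_j (krylov_poly j).[y] ^+ 2 <=
    q.[y] ^+ 2 * \sum_m \sum_j (krylov_poly j).[x m] ^+ 2.
Proof.
move=> x_decr sq qx x0y; rewrite exchange_big mulr_sumr ler_sum // => j _.
by apply: alternating_interp_sqr_le; rewrite ?size_poly.
Qed.

Lemma krylov_vec_s0 : s = 0%N -> v = 0.
Proof.
move=> s0; rewrite big1 // => l _; rewrite big1 // => j.
by have := ltn_ord j; rewrite {2}s0.
Qed.

Lemma krylov_overlap_sqr_le (u1 : 'cV[R]_n) (P : nat -> 'M[R]_n) lam b k :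
  A^T = A -> A *m u1 = lam *: u1 -> 1 <= lam -> (0 < r)%N -> (0 < k)%N ->
  (forall m : 'I_r.+1,
     is_orth_proj_onto (P (m + 2)%N) (eigvec_set A (chebyshev_node R r m))) ->
  (forall j, `|dotv (g j) u1| <= b) ->
  (forall j (m : 'I_r.+1), 2^-1 * Num.sqrt k%:R <= acoef u1 P g j (m + 2)) ->
  (forall (m : 'I_r.+1) sigma, singular_value (Vmat u1 P g (m + 2)) sigma ->
     4^-1 <= sigma) ->
  k%:R / 64 * dotv v u1 ^+ 2 <= b ^+ 2 * s%:R * (chebyshev R r).[lam] ^+ 2 * dotv v v.
Proof.
move=> Asym Au1 lam_ge1 r_gt0 k_gt0 Pproj gu1_le a_ge V_ge.
pose x (m : 'I_r.+1) := chebyshev_node R r m.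
have x_decr : forall i j : 'I_r.+1, (i < j)%N -> x j < x i := chebyshev_node_decr R r_gt0.
have x0_le : x ord0 <= lam by rewrite /x /chebyshev_node mul0r mul0r cos0.
have := sum_krylov_poly_nodes_le Asym k_gt0 (nodes_inj x_decr) Pproj a_ge V_ge.
have := sum_krylov_poly_sqr_le x_decr (size_chebyshev R r)
  (chebyshev_at_node R r_gt0) x0_le.
have := dotv_krylov_sqr_le Asym Au1 gu1_le.
set D := dotv v u1; set T := (chebyshev R r).[lam].
set Plam := \sum_j _; set Sig := \sum_m _.
move=> D_le Plam_le Sig_le.
have k64 : 0 <= k%:R / 64 :> R by rewrite divr_ge0 ?ler0n.
have bs0 : 0 <= b ^+ 2 * s%:R by rewrite mulr_ge0 ?sqr_ge0 ?ler0n.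
have := ler_wpM2l k64 D_le.
have := ler_wpM2l (mulr_ge0 bs0 k64) Plam_le.
have := ler_wpM2l (mulr_ge0 bs0 (sqr_ge0 T)) Sig_le.
lra.
Qed.

End KrylovSubspace.

(** * The numerical budget *)

Lemma overlap_budget_arith (R : realFieldType) (c eps r T L E n : R) :
  0 < eps -> 1 <= r -> 0 <= T -> 0 <= L -> 0 < E -> 2 <= n ->
  c ^+ 2 * (32 * 10 ^+ 3) * 804 ^+ 3 < 2^-1 ->
  eps * r ^+ 2 <= (c * L) ^+ 2 -> T ^+ 2 <= E -> L <= 804 * E ->
  E ^+ 4 <= eps ^+ 2 * n ->
  (16 * 10 ^+ 3) * r * (r + 1) * T ^+ 2 * L < eps * (n - 1).
Proof.
move=> eps0 r1 T0 L0 E0 n2 cK erL TE LE En.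
have err1 : eps * (r * (r + 1)) <= 2 * (c * L) ^+ 2.
  by rewrite expr2 in erL *; nra.
have TLE : T ^+ 2 * L <= E * L by apply: ler_wpM2r.
have L3 : L ^+ 3 <= (804 * E) ^+ 3 by apply: lerXn2r; rewrite ?nnegrE //; lra.
have step1 : eps * ((16 * 10 ^+ 3) * r * (r + 1) * T ^+ 2 * L) <=
    (32 * 10 ^+ 3) * c ^+ 2 * (E * L ^+ 3).
  have : eps * (r * (r + 1)) * (T ^+ 2 * L) <= 2 * (c * L) ^+ 2 * (E * L).
    by apply: ler_pM; rewrite ?mulr_ge0 ?sqr_ge0 //; nra.
  nra.
have step2 : (32 * 10 ^+ 3) * c ^+ 2 * (E * L ^+ 3) < 2^-1 * E ^+ 4.
  have : 0 <= c ^+ 2 * E by rewrite mulr_ge0 ?sqr_ge0 ?ltW.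
  have : 0 < E ^+ 4 by rewrite exprn_gt0.
  nra.
rewrite -(ltr_pM2l eps0); nra.
Qed.

(* The constant c of the statement: any c with 8 c <= 1/804 and
   32000 * 804^3 * c^2 < 1/2 would do. *)
Definition krylov_depth_const (R : realType) : R := (10 ^+ 7)^-1.

Lemma overlap_budget (R : realType) (eps T : R) (n r : nat) :
  0 < eps -> powR eps (- (201%:R / 100)) <= n%:R ->
  r%:R <= krylov_depth_const R * ln n%:R / Num.sqrt eps ->
  (1 <= r)%N -> (2 <= n)%N -> 0 <= T -> T <= expR (4 * Num.sqrt eps * r%:R) ->
  (16 * 10 ^+ 3) * r%:R * (r%:R + 1) * T ^+ 2 * ln n%:R < eps * (n%:R - 1).
Proof.
(* With E = n^(1/804): T^2 <= E because r sqrt eps <= c log n, log n <= 804 E, and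
   E^4 = n^(1/201) <= eps^2 n is the hypothesis n >= eps^(-2.01). *)
move=> eps0 epsn rle r1 n2 T0 Tle.
set c := krylov_depth_const R; set q := Num.sqrt eps; set L := ln n%:R.
have n0 : 0 < n%:R :> R by rewrite ltr0n (leq_trans _ n2).
have L0 : 0 <= L by rewrite ln_ge0 // ler1n (leq_trans _ n2).
have q0 : 0 < q by rewrite sqrtr_gt0.
have rq : r%:R * q <= c * L by rewrite -ler_pdivlMr.
set E := expR (L / 804).
have erL : eps * r%:R ^+ 2 <= (c * L) ^+ 2.
  rewrite -[eps](sqr_sqrtr (ltW eps0)) -/q -exprMn mulrC.
  have rq0 : 0 <= r%:R * q by rewrite mulr_ge0 // ltW.
  by apply: lerXn2r; rewrite // nnegrE (le_trans rq0).
have TE : T ^+ 2 <= E.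
  rewrite (le_trans (lerXn2r _ _ _ Tle)) ?nnegrE ?expR_ge0 // -expRM_natl ler_expR.
  have : 8 * c * L <= 804^-1 * L.
    by apply: ler_wpM2r => //; rewrite /c /krylov_depth_const; lra.
  rewrite -/q; nra.
have LE : L <= 804 * E by have := expR_ge1Dx (L / 804); rewrite -/E; lra.
have En : E ^+ 4 <= eps ^+ 2 * n%:R.
  rewrite -(lnK eps0) -(lnK n0) -/L.
  rewrite -expRM_natl -expRD /E -expRM_natl ler_expR.
  by move: epsn; rewrite /powR gt_eqF // -[n%:R](lnK n0) ler_expR -/L; lra.
apply: (overlap_budget_arith eps0 _ T0 L0 (expR_gt0 _) _ _ erL TE LE En).
- by rewrite ler1n.
- by rewrite ler_nat.
- by rewrite /c /krylov_depth_const; lra.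
Qed.

Lemma overlap_sqr_lt (R : realFieldType) (eps k r L T D : R) :
  0 < k -> 0 <= r -> k / 64 * D ^+ 2 <= 25 * L * r * T ^+ 2 ->
  (16 * 10 ^+ 3) * r * (r + 1) * T ^+ 2 * L < eps * (k * (r + 1)) ->
  D ^+ 2 < eps / 10.
Proof.
move=> k0 r0 overlap budget; have r1 : 0 < r + 1 by lra.
have : (16 * 10 ^+ 3) * r * T ^+ 2 * L < eps * k.
  by rewrite -(ltr_pM2r r1); move: budget; lra.
rewrite -(ltr_pM2l k0); nra.
Qed.

Theorem lemma5p6 :
  forall R : realType,
  exists C : R, 0 < C /\ exists c : R, 0 < c /\
  forall (eps : R) (n r s k : nat),
    0 < eps < 2^-1 ->
    C * powR eps (- (201%:R / 100)) <= n%:R ->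
    (* r = floor (c log n / sqrt eps) *)
    r%:R <= c * ln n%:R / Num.sqrt eps < r%:R + 1 ->
    s = r ->
    n = (k * r.+1).+1 ->
    (100 * s <= k)%N ->
  forall (U : 'M[R]_n) (u1 : 'cV[R]_n) (g : 'I_s -> 'cV[R]_n)
         (P : nat -> 'M[R]_n),
    orthogonal_mx U ->
    let A := U *m Dmat n k r eps *m U^T in
    normv u1 = 1 ->
    A *m u1 = lam1 eps *: u1 ->
    (forall t : nat, (2 <= t <= r + 2)%N ->
       is_orth_proj_onto (P t) (eigvec_set A (lamt R r t))) ->
    (* event (1) *)
    (forall j : 'I_s, acoef u1 P g j 1 <= 5 * Num.sqrt (ln n%:R)) ->
    (* event (2) *)
    (forall (j : 'I_s) (t : nat), (2 <= t <= r + 2)%N ->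
       2^-1 * Num.sqrt k%:R <= acoef u1 P g j t <= 2 * Num.sqrt k%:R) ->
    (* event (3) *)
    (forall t : nat, (2 <= t <= r + 2)%N ->
       forall sigma : R, singular_value (Vmat u1 P g t) sigma ->
         4^-1 <= sigma <= 4) ->
  forall v : 'cV[R]_n,
    in_krylov r A g v -> normv v = 1 ->
    `|dotv v u1| < Num.sqrt (eps / 10).
Proof.
(* All smallness is put into c, so C = 1 suffices. *)
move=> R; exists 1; split=> //; exists (krylov_depth_const R); split.
  by rewrite invr_gt0 exprn_gt0.
move=> eps n r s k epsI; rewrite mul1r => eps_n /andP[r_le _] -> {s} nE r_k.
move=> U u1 g P _ A _ Au1 P_proj ev1 ev2 ev3 v [beta vE] /normv1_dotvv v1.
have r_gt0 : (0 < r)%N.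
  rewrite lt0n; apply/eqP => /(krylov_vec_s0 A g beta); rewrite -vE => v0.
  by move: v1; rewrite v0 dotv0l => /eqP; rewrite eq_sym oner_eq0.
have eps0 : 0 < eps by case/andP: epsI.
have k_gt0 : (0 < k)%N by rewrite (leq_trans _ r_k) // muln_gt0.
have n_gt1 : (1 < n)%N by rewrite nE ltnS muln_gt0 k_gt0.
have t_range (m : 'I_r.+1) : (2 <= m + 2 <= r + 2)%N.
  by rewrite leq_addl leq_add2r -ltnS ltn_ord.
have P_proj_node (m : 'I_r.+1) :
    is_orth_proj_onto (P (m + 2)%N) (eigvec_set A (chebyshev_node R r m)).
  by have := P_proj _ (t_range m); rewrite /lamt addnK.
have A_sym : A^T = A by rewrite !trmx_mul trmxK tr_diag_mx mulmxA.
have lam1_ge1 : 1 <= lam1 eps by rewrite /lam1 lerDl mulr_ge0 ?ltW.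
have lnn_ge0 : 0 <= ln n%:R :> R by rewrite ln_ge0 // ler1n ltnW.
have overlap : k%:R / 64 * dotv v u1 ^+ 2 <=
    25 * ln n%:R * r%:R * (chebyshev R r).[lam1 eps] ^+ 2.
  have := krylov_overlap_sqr_le beta A_sym Au1 lam1_ge1 r_gt0 k_gt0 P_proj_node ev1
    (fun j m => proj1 (andP (ev2 j _ (t_range m))))
    (fun m sigma Vs => proj1 (andP (ev3 _ (t_range m) sigma Vs))).
  by rewrite -vE v1 mulr1 exprMn sqr_sqrtr // -natrX.
have /andP[T0 T_le] := chebyshev_lam1_le r epsI.
have := overlap_budget eps0 eps_n r_le r_gt0 n_gt1 T0 T_le.
have -> : n%:R - 1 = k%:R * (r%:R + 1) :> R.
  by rewrite nE -addn1 natrD addrK natrM -addn1 natrD.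
move=> budget; rewrite -sqrtr_sqr ltr_sqrt ?divr_gt0 //.
by apply: (overlap_sqr_lt _ _ overlap budget); rewrite ?ltr0n ?ler0n.
Qed.
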